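(* For real $x>0$, let $$W_0(x)=\sum_{\substack{n\geqslant 1\\ \lfloor x/n\rfloor=\lfloor x/(n+1)\rfloor}}\bigl\lvert \{x/(n+1)\}-\{x/n\}\bigr\rvert .$$ Then, for $x>0$, $$W_0(x)=\frac 23\sqrt{x}+O(1),$$ with an absolute implied constant.
   Context: For a real number $t$, $\lfloor t\rfloor$ denotes its integer part and $\{t\}=t-\lfloor t\rfloor$ its fractional part. *)

From Stdlib Require Import Reals.
From Coquelicot Require Import Coquelicot.
Open Scope R_scope.

(* floor t = Int_part t (Stdlib: Int_part t = up t - 1, the integer part);
   fractional part {t} = frac_part t = t - Int_part t. *)

Definition W0_term (x : R) (n : nat) : R :=
  if Z.eq_dec (Int_part (x / INR n)) (Int_part (x / INR (n + 1)))
  then Rabs (frac_part (x / INR (n + 1)) - frac_part (x / INR n))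
  else 0.

(* Reindexed from k = 0: the k-th summand corresponds to n = k + 1 >= 1. *)
Definition W0_seq (x : R) (k : nat) : R := W0_term x (S k).

Definition W0 (x : R) : R := Series (W0_seq x).

From Stdlib Require Import Reals Lra Lia.
From Coquelicot Require Import Coquelicot.
Open Scope R_scope.

(* With g_n = x/n - x/(n+1) = x/(n(n+1)), the n-th term vanishes when g_n >= 1,
   i.e. for n(n+1) <= x, and otherwise equals g_n (1 - g_n + {x/n} - {x/(n+1)}),
   since the two floors differ by g_n - {x/n} + {x/(n+1)} in {0, 1}.  Summing
   from the first n = m with x < m(m+1), so that m ~ sqrt x: the g_n telescope
   to x/m, the g_n^2 sum to x^2/(3 m^3) + O(1) by comparison with the
   telescoping 1/(3 n^3), and the g_n ({x/n} - {x/(n+1)}) sum to O(1) by Abel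
   summation because g_n decreases and g_m < 1.  Finally
   x/m - x^2/(3 m^3) = 2/3 sqrt x + O(1) whenever m^2 - m <= x <= m^2 + m. *)

Fixpoint sum_from (f : nat -> R) (a j : nat) : R :=
  match j with O => 0 | S j => sum_from f a j + f (a + j)%nat end.

Lemma sum_from_add f a j k : sum_from f a (j + k) = sum_from f a j + sum_from f (a + j) k.
Proof.
  induction k as [|k IHk]; simpl.
  - rewrite Nat.add_0_r; ring.
  - rewrite Nat.add_succ_r; simpl. rewrite IHk, Nat.add_assoc. ring.
Qed.

Lemma sum_from_eq0 f a j : (forall n, (a <= n < a + j)%nat -> f n = 0) -> sum_from f a j = 0.
Proof.
  induction j as [|j IHj]; intros Hf; simpl; [reflexivity|].
  rewrite IHj, (Hf (a + j)%nat); [ring | lia | intros n Hn; apply Hf; lia].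
Qed.

Lemma sum_from_le f g a j : (forall n, (a <= n)%nat -> f n <= g n) ->
  sum_from f a j <= sum_from g a j.
Proof.
  intros Hfg. induction j as [|j IHj]; simpl; [lra|].
  pose proof (Hfg (a + j)%nat ltac:(lia)). lra.
Qed.

Lemma sum_from_telescope u a j : sum_from (fun n => u n - u (S n)) a j = u a - u (a + j)%nat.
Proof.
  induction j as [|j IHj]; simpl.
  - rewrite Nat.add_0_r; ring.
  - rewrite IHj, Nat.add_succ_r. ring.
Qed.

(* Abel summation: the partial sums plus g_(a+j) th_(a+j) stay in [g_a th_a - g_a, g_a th_a]. *)
Lemma sum_from_abel_bound g th a j :
  (forall n, (a <= n)%nat -> 0 <= g (S n) <= g n) -> (forall n, 0 <= th n <= 1) ->
  Rabs (sum_from (fun n => g n * (th n - th (S n))) a j) <= g a.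
Proof.
  intros Hg Hth.
  assert (Hinv : forall k, g a * th a - g a + g (a + k)%nat
      <= sum_from (fun n => g n * (th n - th (S n))) a k + g (a + k)%nat * th (a + k)%nat
      <= g a * th a).
  { induction k as [|k IHk]; simpl.
    - rewrite Nat.add_0_r. lra.
    - rewrite Nat.add_succ_r.
      pose proof (Hg (a + k)%nat ltac:(lia)). pose proof (Hth (S (a + k))). nra. }
  destruct (Hinv j). pose proof (Hth a). pose proof (Hth (a + j)%nat).
  assert (0 <= g (a + j)%nat <= g a).
  { clear -Hg. induction j as [|j IHj].
    - rewrite Nat.add_0_r. pose proof (Hg a (le_n a)). lra.
    - rewrite Nat.add_succ_r. pose proof (Hg (a + j)%nat ltac:(lia)). lra. }
  apply Rabs_le. nra.
Qed.

Lemma Int_part_eq_sub_lt_1 a b : Int_part a = Int_part b -> a - b < 1.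
Proof.
  intros E. destruct (base_Int_part a), (base_Int_part b). rewrite E in *. lra.
Qed.

Lemma Int_part_sub_lt_1 a b : 0 <= a - b < 1 ->
  Int_part a = Int_part b \/ Int_part a = (Int_part b + 1)%Z.
Proof.
  intros H. destruct (base_Int_part a), (base_Int_part b).
  assert (-1 < Int_part a - Int_part b < 2)%Z as D.
  { split; apply lt_IZR; rewrite minus_IZR; simpl; lra. }
  lia.
Qed.

Lemma Series_between (a : nat -> R) lo hi : ex_series a ->
  eventually (fun K => lo <= sum_n a K <= hi) -> lo <= Series a <= hi.
Proof.
  intros Ha Hev. pose proof (Series_correct a Ha) as HS. split.
  - apply (is_lim_seq_le_loc (fun _ => lo) (sum_n a) lo (Series a)); [|apply is_lim_seq_const|exact HS].
    revert Hev; apply filter_imp; intros K H; apply H.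
  - apply (is_lim_seq_le_loc (sum_n a) (fun _ => hi) (Series a) hi); [|exact HS|apply is_lim_seq_const].
    revert Hev; apply filter_imp; intros K H; apply H.
Qed.

Lemma sum_n_W0_seq x K : sum_n (W0_seq x) K = sum_from (W0_term x) 1 (S K).
Proof.
  induction K as [|K IHK].
  - rewrite sum_O. simpl. unfold W0_seq. ring.
  - rewrite sum_Sn, IHK. reflexivity.
Qed.

Definition gap (x : R) (n : nat) : R := x / INR n - x / INR (S n).
Definition frac_div (x : R) (n : nat) : R := frac_part (x / INR n).

Lemma gap_eq x n : (1 <= n)%nat -> gap x n = x / (INR n * INR (S n)).
Proof.
  intros Hn. assert (0 < INR n) by (apply lt_0_INR; lia).
  unfold gap. rewrite S_INR. field. lra.
Qed.

Lemma gap_lt_1_iff x n : (1 <= n)%nat -> gap x n < 1 <-> x < INR n * INR (S n).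
Proof.
  intros Hn. assert (0 < INR n * INR (S n)) by (apply Rmult_lt_0_compat; apply lt_0_INR; lia).
  rewrite gap_eq by exact Hn. split; intros H'.
  - apply (Rmult_lt_compat_r (INR n * INR (S n))) in H'; [|lra].
    unfold Rdiv in H'. rewrite Rmult_assoc, Rinv_l in H' by lra. lra.
  - apply (Rmult_lt_reg_r (INR n * INR (S n))); [lra|].
    unfold Rdiv. rewrite Rmult_assoc, Rinv_l by lra. lra.
Qed.

Lemma gap_pos x n : 0 < x -> (1 <= n)%nat -> 0 < gap x n.
Proof.
  intros Hx Hn. rewrite gap_eq by exact Hn.
  apply Rdiv_lt_0_compat; [lra|]. apply Rmult_lt_0_compat; apply lt_0_INR; lia.
Qed.

Lemma gap_succ_le x n : 0 < x -> (1 <= n)%nat -> gap x (S n) <= gap x n.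
Proof.
  intros Hx Hn. rewrite !gap_eq by lia. rewrite !S_INR.
  assert (0 < INR n) by (apply lt_0_INR; lia).
  apply Rmult_le_compat_l; [lra|]. apply Rinv_le_contravar; nra.
Qed.

Lemma W0_term_spec x n :
  W0_term x n = if Z.eq_dec (Int_part (x / INR n)) (Int_part (x / INR (S n)))
                then Rabs (gap x n) else 0.
Proof.
  unfold W0_term, gap. rewrite Nat.add_1_r.
  destruct Z.eq_dec as [E|]; [|reflexivity].
  unfold frac_part. rewrite E, <- Rabs_Ropp. f_equal. ring.
Qed.

Lemma W0_term_cases x n : 0 < x -> (1 <= n)%nat -> W0_term x n = 0 \/ W0_term x n = gap x n.
Proof.
  intros Hx Hn. rewrite W0_term_spec. destruct Z.eq_dec; [right|left; reflexivity].
  apply Rabs_pos_eq, Rlt_le, gap_pos; assumption.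
Qed.

Lemma W0_term_bounds x n : 0 < x -> (1 <= n)%nat -> 0 <= W0_term x n <= gap x n.
Proof.
  intros Hx Hn. pose proof (gap_pos x n Hx Hn).
  destruct (W0_term_cases x n Hx Hn) as [E|E]; rewrite E; lra.
Qed.

Lemma W0_term_eq0 x n : (1 <= n)%nat -> INR n * INR (S n) <= x -> W0_term x n = 0.
Proof.
  intros Hn Hb. rewrite W0_term_spec. destruct Z.eq_dec as [E|]; [|reflexivity].
  apply Int_part_eq_sub_lt_1 in E. apply gap_lt_1_iff in E; [lra|exact Hn].
Qed.

(* When the floors differ by 1, {x/n} - {x/(n+1)} = gap - 1 and the right side vanishes. *)
Lemma W0_term_eq x n : 0 < x -> (1 <= n)%nat -> x < INR n * INR (S n) ->
  W0_term x n = gap x n - gap x n ^ 2 + gap x n * (frac_div x n - frac_div x (S n)).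
Proof.
  intros Hx Hn Hb. pose proof (gap_pos x n Hx Hn) as Hg0.
  apply gap_lt_1_iff in Hb; [|exact Hn].
  assert (Hfloor : Int_part (x / INR n) = Int_part (x / INR (S n))
                   \/ Int_part (x / INR n) = (Int_part (x / INR (S n)) + 1)%Z).
  { apply Int_part_sub_lt_1. unfold gap in *. lra. }
  rewrite W0_term_spec. unfold frac_div, frac_part.
  destruct Z.eq_dec as [E|NE].
  - rewrite E, Rabs_pos_eq by lra. unfold gap. ring.
  - destruct Hfloor as [E|E]; [contradiction|].
    rewrite E, plus_IZR. unfold gap. simpl. ring.
Qed.

Lemma sum_from_W0_term_tail x m j : 0 < x -> (1 <= m)%nat -> x < INR m * INR (S m) ->
  sum_from (W0_term x) m j =
    (x / INR m - x / INR (m + j)) - sum_from (fun n => gap x n ^ 2) m j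
    + sum_from (fun n => gap x n * (frac_div x n - frac_div x (S n))) m j.
Proof.
  intros Hx Hm Hb. induction j as [|j IHj]; cbn [sum_from].
  - rewrite Nat.add_0_r. ring.
  - assert (Hmj : x < INR (m + j) * INR (S (m + j))).
    { rewrite plus_INR, !S_INR, plus_INR in *. pose proof (pos_INR j).
      pose proof (pos_INR m). nra. }
    rewrite IHj, W0_term_eq, Nat.add_succ_r by (assumption || lia).
    unfold gap. ring.
Qed.

Definition third_inv_cube (r : R) : R := / (3 * r ^ 3).

Lemma third_inv_cube_pos r : 0 < r -> 0 < third_inv_cube r.
Proof. intros. apply Rinv_0_lt_compat. assert (0 < r ^ 3) by (apply pow_lt; lra). lra. Qed.

Lemma third_inv_cube_le r c : 1 <= r -> c <= r -> c * third_inv_cube r <= 1 / 3.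
Proof.
  intros Hr Hc. unfold third_inv_cube. assert (r <= r ^ 3) by (simpl; nra).
  assert (0 < r ^ 3) by lra.
  apply (Rmult_le_reg_r (3 * r ^ 3)); [lra|].
  rewrite Rmult_assoc, Rinv_l by lra. lra.
Qed.

Lemma inv_sq_pronic_le r : 0 < r ->
  / (r * (r + 1)) ^ 2 <= third_inv_cube r - third_inv_cube (r + 1).
Proof.
  intros Hr. unfold third_inv_cube.
  assert (E : / (3 * r ^ 3) - / (3 * (r + 1) ^ 3) - / (r * (r + 1)) ^ 2
              = / (3 * r ^ 3 * (r + 1) ^ 3)) by (field; lra).
  assert (0 < / (3 * r ^ 3 * (r + 1) ^ 3)).
  { apply Rinv_0_lt_compat. repeat apply Rmult_lt_0_compat; try lra; apply pow_lt; lra. }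
  lra.
Qed.

Lemma inv_sq_pronic_ge r : 0 < r ->
  third_inv_cube (r + 1) - third_inv_cube (r + 2) <= / (r * (r + 1)) ^ 2.
Proof.
  intros Hr. unfold third_inv_cube.
  assert (E : / (r * (r + 1)) ^ 2 - (/ (3 * (r + 1) ^ 3) - / (3 * (r + 2) ^ 3))
      = (12 * r ^ 3 + 47 * r ^ 2 + 60 * r + 24) / (3 * r ^ 2 * (r + 1) ^ 3 * (r + 2) ^ 3))
    by (field; lra).
  assert (0 <= (12 * r ^ 3 + 47 * r ^ 2 + 60 * r + 24) / (3 * r ^ 2 * (r + 1) ^ 3 * (r + 2) ^ 3)).
  { apply Rdiv_le_0_compat; [nra|]. repeat apply Rmult_lt_0_compat; try lra; apply pow_lt; lra. }
  lra.
Qed.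

Lemma gap_sq x n : (1 <= n)%nat -> gap x n ^ 2 = x ^ 2 * / (INR n * (INR n + 1)) ^ 2.
Proof.
  intros Hn. assert (0 < INR n) by (apply lt_0_INR; lia).
  rewrite gap_eq, S_INR by exact Hn. field. lra.
Qed.

Lemma sum_gap_sq_le x m j : (1 <= m)%nat ->
  sum_from (fun n => gap x n ^ 2) m j
    <= x ^ 2 * (third_inv_cube (INR m) - third_inv_cube (INR (m + j))).
Proof.
  intros Hm. set (u n := x ^ 2 * third_inv_cube (INR n)).
  replace (x ^ 2 * _) with (u m - u (m + j)%nat) by (unfold u; ring).
  rewrite <- sum_from_telescope. apply sum_from_le. intros n Hn. unfold u.
  rewrite gap_sq, S_INR by lia. pose proof (inv_sq_pronic_le (INR n) ltac:(apply lt_0_INR; lia)).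
  pose proof (pow2_ge_0 x). nra.
Qed.

Lemma sum_gap_sq_ge x m j : (1 <= m)%nat ->
  x ^ 2 * (third_inv_cube (INR (S m)) - third_inv_cube (INR (S (m + j))))
    <= sum_from (fun n => gap x n ^ 2) m j.
Proof.
  intros Hm. set (u n := x ^ 2 * third_inv_cube (INR (S n))).
  replace (x ^ 2 * _) with (u m - u (m + j)%nat) by (unfold u; ring).
  rewrite <- sum_from_telescope. apply sum_from_le. intros n Hn. unfold u.
  rewrite gap_sq, !S_INR by lia.
  pose proof (inv_sq_pronic_ge (INR n) ltac:(apply lt_0_INR; lia)).
  replace (INR n + 1 + 1) with (INR n + 2) by ring.
  pose proof (pow2_ge_0 x). nra.
Qed.

Lemma sqrt_between m x : 1 <= m -> m * m - m <= x <= m * m + m -> m - 1 <= sqrt x <= m + 1.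
Proof.
  intros Hm Hx. split.
  - rewrite <- (sqrt_square (m - 1)) by lra. apply sqrt_le_1_alt. nra.
  - rewrite <- (sqrt_square (m + 1)) by lra. apply sqrt_le_1_alt. nra.
Qed.

Lemma two_thirds_sqrt_le m x : 1 <= m -> m * m - m <= x <= m * m + m ->
  2 / 3 * sqrt x - 4 / 3 <= x / m - x ^ 2 * third_inv_cube m.
Proof.
  intros Hm Hx. pose proof (sqrt_between m x Hm Hx). unfold third_inv_cube.
  assert (P : 0 <= 3 * m ^ 2 * x - x ^ 2 - 2 * m ^ 4 + 2 * m ^ 3).
  { assert (0 <= (x - m * m + m) * m ^ 2) by nra.
    assert (0 <= (m * m + m - x) * (x - m * m + m)) by nra.
    assert (0 <= m ^ 2 * (m - 1)) by nra. nra. }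
  assert (E : x / m - x ^ 2 * / (3 * m ^ 3) - (2 * m / 3 - 2 / 3)
              = (3 * m ^ 2 * x - x ^ 2 - 2 * m ^ 4 + 2 * m ^ 3) / (3 * m ^ 3)) by (field; lra).
  assert (0 <= (3 * m ^ 2 * x - x ^ 2 - 2 * m ^ 4 + 2 * m ^ 3) / (3 * m ^ 3)).
  { apply Rdiv_le_0_compat; [exact P|]. assert (0 < m ^ 3) by (apply pow_lt; lra). lra. }
  lra.
Qed.

Lemma le_two_thirds_sqrt m x : 1 <= m -> m * m - m <= x <= m * m + m ->
  x / m - x ^ 2 * third_inv_cube (m + 1) <= 2 / 3 * sqrt x + 3.
Proof.
  intros Hm Hx. pose proof (sqrt_between m x Hm Hx). unfold third_inv_cube.
  assert (P : 3 * x * (m + 1) ^ 3 - x ^ 2 * m - (2 * m + 7) * m * (m + 1) ^ 3 <= 0).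
  { assert (0 <= 3 * (m + 1) ^ 3 - m * (x + m * (m + 1))) by nra.
    assert (0 <= (m * (m + 1) - x) * (3 * (m + 1) ^ 3 - m * (x + m * (m + 1)))) by nra.
    assert (0 <= m * (m + 1) ^ 2 * (3 * m + 4)) by nra. nra. }
  assert (E : x / m - x ^ 2 * / (3 * (m + 1) ^ 3) - (2 * m + 7) / 3 =
     (3 * x * (m + 1) ^ 3 - x ^ 2 * m - (2 * m + 7) * m * (m + 1) ^ 3) / (3 * m * (m + 1) ^ 3))
    by (field; lra).
  assert ((3 * x * (m + 1) ^ 3 - x ^ 2 * m - (2 * m + 7) * m * (m + 1) ^ 3)
          / (3 * m * (m + 1) ^ 3) <= 0).
  { unfold Rdiv. apply Rmult_le_0_r; [exact P|]. apply Rlt_le, Rinv_0_lt_compat.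
    assert (0 < (m + 1) ^ 3) by (apply pow_lt; lra). nra. }
  lra.
Qed.

Lemma pronic_bracket x : 0 <= x ->
  exists m : nat, (1 <= m)%nat /\ INR m * (INR m - 1) <= x < INR m * (INR m + 1).
Proof.
  intros Hx. destruct (INR_archimed 1 x ltac:(lra)) as [k Hk].
  assert (Hk' : x < INR (S k) * (INR (S k) + 1)).
  { rewrite S_INR. pose proof (pos_INR k). nra. }
  clear Hk. induction k as [|k IHk].
  - exists 1%nat. simpl in *. split; [lia|split; lra].
  - destruct (Rlt_le_dec x (INR (S k) * (INR (S k) + 1))) as [Hlt|Hle].
    + exact (IHk Hlt).
    + exists (S (S k)). rewrite S_INR in Hk' |- *. split; [lia|split; lra].
Qed.

Lemma ex_series_W0_seq x : 0 < x -> ex_series (W0_seq x).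
Proof.
  intros Hx. destruct (ex_finite_lim_seq_incr (sum_n (W0_seq x)) x) as [l Hl].
  - intros n. rewrite sum_Sn. pose proof (W0_term_bounds x (S (S n)) Hx ltac:(lia)).
    unfold W0_seq, plus. simpl. lra.
  - intros n. rewrite sum_n_W0_seq.
    assert (Hle : sum_from (W0_term x) 1 (S n) <= sum_from (gap x) 1 (S n)).
    { apply sum_from_le. intros k Hk. apply W0_term_bounds; assumption. }
    unfold gap in Hle. rewrite (sum_from_telescope (fun k => x / INR k)) in Hle.
    assert (0 <= x / INR (1 + S n)) by (apply Rdiv_le_0_compat; [lra|apply lt_0_INR; lia]).
    replace (x / INR 1) with x in Hle by (simpl; field). lra.
  - exists l. exact Hl.
Qed.

Lemma W0_partial_sum_between x L : 0 < x -> 1 + x + x ^ 2 <= INR L ->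
  2 / 3 * sqrt x - 5 <= sum_from (W0_term x) 1 L <= 2 / 3 * sqrt x + 5.
Proof.
  intros Hx HL. destruct (pronic_bracket x ltac:(lra)) as [m [Hm [Hlo Hhi]]].
  assert (HmL : (m <= L)%nat).
  { apply INR_le. assert (0 <= (INR m - 1) ^ 2) by apply pow2_ge_0.
    pose proof (pow2_ge_0 x). nra. }
  set (j := S (L - m)).
  replace L with (pred m + j)%nat by (unfold j; lia).
  rewrite sum_from_add, sum_from_eq0, Rplus_0_l.
  2:{ intros n Hn. apply W0_term_eq0; [lia|].
      assert (INR (S n) <= INR m) by (apply le_INR; lia). rewrite S_INR in *.
      pose proof (pos_INR n). nra. }
  replace (1 + pred m)%nat with m by lia.
  rewrite sum_from_W0_term_tail; [|exact Hx|exact Hm|rewrite S_INR; exact Hhi].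
  assert (Hm1 : 1 <= INR m) by (apply (le_INR 1); exact Hm).
  assert (Hbr : INR m * INR m - INR m <= x <= INR m * INR m + INR m) by lra.
  pose proof (two_thirds_sqrt_le (INR m) x Hm1 Hbr).
  pose proof (le_two_thirds_sqrt (INR m) x Hm1 Hbr).
  pose proof (sum_gap_sq_le x m j Hm). pose proof (sum_gap_sq_ge x m j Hm) as Hge.
  rewrite !S_INR in Hge.
  assert (Habel : Rabs (sum_from (fun n => gap x n * (frac_div x n - frac_div x (S n))) m j)
                  <= gap x m).
  { apply sum_from_abel_bound.
    - intros n Hn. pose proof (gap_pos x (S n) Hx ltac:(lia)).
      pose proof (gap_succ_le x n Hx ltac:(lia)). lra.
    - intros n. unfold frac_div. destruct (base_fp (x / INR n)). lra. }
  apply Rabs_le_between in Habel.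
  assert (gap x m < 1) by (apply gap_lt_1_iff; [exact Hm|rewrite S_INR; exact Hhi]).
  assert (Hx2 : 0 <= x ^ 2) by apply pow2_ge_0.
  assert (HmjL : 1 + x + x ^ 2 <= INR (m + j)).
  { unfold j. rewrite plus_INR, S_INR, minus_INR by lia. lra. }
  assert (0 <= x / INR (m + j) <= 1).
  { split; [apply Rdiv_le_0_compat; lra|].
    apply (Rmult_le_reg_r (INR (m + j))); [lra|]. unfold Rdiv.
    rewrite Rmult_assoc, Rinv_l by lra. lra. }
  assert (0 <= x ^ 2 * third_inv_cube (INR (m + j))).
  { apply Rmult_le_pos; [exact Hx2|apply Rlt_le, third_inv_cube_pos; lra]. }
  assert (x ^ 2 * third_inv_cube (INR (m + j) + 1) <= 1 / 3).
  { apply third_inv_cube_le; pose proof (pos_INR (m + j)); lra. }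
  split; lra.
Qed.

Theorem proposition1 :
  exists C : R, forall x : R, 0 < x ->
    ex_series (W0_seq x) /\ Rabs (W0 x - 2 / 3 * sqrt x) <= C.
Proof.
  exists 5. intros x Hx. split; [exact (ex_series_W0_seq x Hx)|].
  apply Rabs_le. enough (2 / 3 * sqrt x - 5 <= W0 x <= 2 / 3 * sqrt x + 5) by lra.
  apply Series_between; [exact (ex_series_W0_seq x Hx)|].
  destruct (INR_archimed 1 (1 + x + x ^ 2) ltac:(lra)) as [N HN].
  exists N. intros K HK. rewrite sum_n_W0_seq.
  apply W0_partial_sum_between; [exact Hx|].
  assert (INR N <= INR (S K)) by (apply le_INR; lia). lra.
Qed.
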